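(* Let $k\ge2$ and let $p_1,\dots,p_k$ be distinct primes, $n=p_1\cdots p_k$. Then $$\Phi_{n}(x)=f(x)\cdot\prod_{j=1}^{k-2}P_j(x),$$ where $$f(x)=(1-x^{n})\cdot\frac{\prod_{i=2}^k\big(1-x^{p_2\cdots p_k/p_i}\big)}{\prod_{i=1}^k\big(1-x^{n/p_i}\big)}\qquad\text{and}\qquad P_j(x)=\prod_{i=j+2}^k\Phi_{p_1\cdots p_j}\big(x^{p_{j+2}\cdots p_k/p_i}\big).$$
   Context: $\Phi_m$ denotes the $m$-th cyclotomic polynomial. In the exponents, $p_2\cdots p_k/p_i$ means the product $p_2p_3\cdots p_k$ divided by $p_i$, and $p_{j+2}\cdots p_k/p_i$ means the product $p_{j+2}\cdots p_k$ divided by $p_i$. Empty products equal $1$. *)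

From HB Require Import structures.
From mathcomp Require Import all_boot all_order all_algebra all_field.
From mathcomp Require Import fraction.
Set Implicit Arguments. Unset Strict Implicit. Unset Printing Implicit Defensive.
Import GRing.Theory.
Local Open Scope ring_scope.

Notation "x %:F" := (@FracField.tofrac _ x) : ring_scope.

(* Primes are indexed p 1, ..., p k (values of p outside 1..k are irrelevant). *)
Definition prodp (p : nat -> nat) (a b : nat) : nat := (\prod_(a <= i < b.+1) p i)%N.

Definition f_cyc (p : nat -> nat) (k : nat) : {fraction {poly int}} :=
  (((1 - 'X^(prodp p 1 k)) *
     \prod_(2 <= i < k.+1) (1 - 'X^(prodp p 2 k %/ p i)%N)) : {poly int})%:F /
  ((\prod_(1 <= i < k.+1) (1 - 'X^(prodp p 1 k %/ p i)%N)) : {poly int})%:F.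

Definition P_cyc (p : nat -> nat) (k j : nat) : {poly int} :=
  \prod_(j.+2 <= i < k.+1) ('Phi_(prodp p 1 j) \Po 'X^(prodp p j.+2 k %/ p i)%N).

From HB Require Import structures.
From mathcomp Require Import all_boot all_order all_algebra all_field.
From mathcomp Require Import fraction ring.
Set Implicit Arguments. Unset Strict Implicit. Unset Printing Implicit Defensive.
Import GRing.Theory.
Local Open Scope ring_scope.

(* Write n_j = p_1 ... p_j.  The engine is the classical identity
   Phi_m(x^q) = Phi_(mq)(x) Phi_m(x) for a prime q not dividing m, which in the
   form Phi_(n_j)(x^(p_(j+1) b)) = Phi_(n_(j+1))(x^b) Phi_(n_j)(x^b) yields two
   telescoping products.  Starting from x^n - 1 = Phi_(n_0)(x^n), peeling off one
   prime at a time gives x^n - 1 = Phi_n * prod_j D_j with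
   D_j = Phi_(n_j)(x^(p_(j+2)...p_k)); doing the same simultaneously for all the
   factors x^(n/p_i) - 1 gives prod_i (x^(n/p_i) - 1) = prod_j D_j P_j.  Dividing
   the two, the D_j cancel and Phi_n * prod_i (x^(n/p_i) - 1) = (x^n - 1) prod_j P_j,
   where P_0 is the numerator product of f and P_(k-1) is empty. *)

Lemma comp_polyXn_Xn (R : nzRingType) a b :
  ('X^a : {poly R}) \Po 'X^b = 'X^(b * a).
Proof. by rewrite comp_Xn_poly exprM. Qed.

Lemma Cyclotomic_neq0 n : 'Phi_n != 0.
Proof. exact/monic_neq0/Cyclotomic_monic. Qed.

Lemma Cyclotomic1 : 'Phi_1 = 'X - 1.
Proof. by have := prod_Cyclotomic (ltn0Sn 0); rewrite big_seq1 expr1. Qed.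

Lemma prod_one_sub (R : comPzRingType) a b (F : nat -> R) :
  \prod_(a <= i < b) (1 - F i) = (-1) ^+ (b - a) * \prod_(a <= i < b) (F i - 1).
Proof.
rewrite -prodr_const_nat -big_split /=; apply: eq_bigr => i _.
by rewrite mulN1r opprB.
Qed.

Lemma divisors_mul_prime m q : prime q -> (0 < m)%N -> ~~ (q %| m)%N ->
  perm_eq (divisors (m * q)) (divisors m ++ [seq (d * q)%N | d <- divisors m]).
Proof.
move=> q_pr m_gt0 qNm; have q_gt0 := prime_gt0 q_pr.
have mulq_inj : injective (muln^~ q) by move=> a b /eqP; rewrite eqn_pmul2r // => /eqP.
apply: uniq_perm.
- exact: divisors_uniq.
- rewrite cat_uniq divisors_uniq map_inj_uniq ?divisors_uniq //= andbT.
  apply/hasPn => _ /mapP [d dm ->]; rewrite -dvdn_divisors //.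
  by apply: contra qNm => /(dvdn_trans (dvdn_mull d (dvdnn q))).
move=> x; rewrite mem_cat -!dvdn_divisors ?muln_gt0 ?m_gt0 ?q_gt0 //.
apply/idP/orP => [|[x_m | /mapP [d dm ->]]]; last 2 first.
- exact: dvdn_mulr.
- by rewrite dvdn_pmul2r // dvdn_divisors.
have [/dvdnP [e ->] | qNx] := boolP (q %| x)%N.
  by rewrite dvdn_pmul2r // => e_m; right; apply: map_f; rewrite -dvdn_divisors.
rewrite Gauss_dvdl; last by rewrite coprime_sym prime_coprime.
by move=> x_m; left.
Qed.

(* Strong induction on m: the divisor-product formula for x^(mq) - 1 expresses
   both sides as products over the divisors of m, and the factors indexed by
   proper divisors agree by the induction hypothesis and cancel. *)
Lemma Cyclotomic_comp_Xprime m q : prime q -> (0 < m)%N -> ~~ (q %| m)%N ->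
  'Phi_m \Po 'X^q = 'Phi_(m * q) * 'Phi_m.
Proof.
move=> q_pr; have q_gt0 := prime_gt0 q_pr.
elim/ltn_ind: m => m IH m_gt0 qNm.
have mq_gt0 : (0 < m * q)%N by rewrite muln_gt0 m_gt0.
have comp_divisors : \prod_(d <- divisors m) ('Phi_d \Po 'X^q) =
                     \prod_(d <- divisors m) ('Phi_(d * q) * 'Phi_d).
  rewrite -(big_morph _ (fun r s => comp_polyM r s _) (comp_polyC 1 _)) prod_Cyclotomic //.
  rewrite comp_polyB comp_polyC comp_polyXn_Xn mulnC -prod_Cyclotomic //.
  by rewrite (perm_big _ (divisors_mul_prime q_pr m_gt0 qNm)) big_cat big_map big_split /= mulrC.
have m_m := divisors_id m_gt0; have uniq_m := divisors_uniq m.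
move: comp_divisors; rewrite !(bigD1_seq m m_m uniq_m) /=.
have proper_divisors : \prod_(d <- divisors m | d != m) ('Phi_(d * q) * 'Phi_d) =
                       \prod_(d <- divisors m | d != m) ('Phi_d \Po 'X^q).
  rewrite big_seq_cond [RHS]big_seq_cond; apply: eq_bigr => d /andP [d_m dNm].
  rewrite -dvdn_divisors // in d_m.
  have d_lt_m : (d < m)%N by rewrite ltn_neqAle dNm dvdn_leq.
  have qNd : ~~ (q %| d)%N by apply: contra qNm => /dvdn_trans; apply.
  by rewrite IH ?(dvdn_gt0 m_gt0 d_m).
rewrite proper_divisors; apply: mulIf; rewrite prodf_seq_neq0.
apply/allP => d _; apply/implyP => _.
by rewrite comp_poly_eq0 ?Cyclotomic_neq0 // size_polyXn ltnS.
Qed.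

Lemma prod_telescope (R : comPzRingType) (a c : nat -> R) k :
  (forall j, (j < k)%N -> a j = a j.+1 * c j) ->
  a 0%N = a k * \prod_(0 <= j < k) c j.
Proof.
elim: k => [|k IH] step; first by rewrite big_geq ?mulr1.
rewrite IH => [|j j_lt]; last exact/step/ltnW.
by rewrite step // big_nat_recr //= -mulrA [c k * _]mulrC.
Qed.

Lemma prodp_recr p j : prodp p 1 j.+1 = (prodp p 1 j * p j.+1)%N.
Proof. by rewrite /prodp big_nat_recr. Qed.

Lemma prodp_recl p i j : (i <= j)%N -> prodp p i j = (p i * prodp p i.+1 j)%N.
Proof. by move=> le_ij; rewrite /prodp big_ltn // ltnS. Qed.

Lemma prodp_nil p i j : (j < i)%N -> prodp p i j = 1%N.
Proof. by move=> lt_ji; rewrite /prodp big_geq. Qed.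

Lemma dvdn_prodp p a b i : (a <= i <= b)%N -> (p i %| prodp p a b)%N.
Proof.
case/andP => a_i i_b; have i_lt : (i < b.+1)%N by [].
rewrite /prodp (@big_cat_nat _ _ _ i) ?(ltnW i_lt) //= (big_ltn i_lt).
by rewrite dvdn_mull // dvdn_mulr.
Qed.

Section CyclotomicSquarefree.

Variables (k : nat) (p : nat -> nat).
Hypothesis p_prime : forall i, (1 <= i <= k)%N -> prime (p i).
Hypothesis p_inj :
  forall i j, (1 <= i <= k)%N -> (1 <= j <= k)%N -> p i = p j -> i = j.

Lemma prodp_gt0 a b : (1 <= a)%N -> (b <= k)%N -> (0 < prodp p a b)%N.
Proof.
move=> a_ge1 b_le; rewrite /prodp big_nat.
apply: (big_ind (fun x => 0 < x)%N) => [//|x y|i /andP [a_i i_b]].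
  by rewrite muln_gt0 => -> ->.
by rewrite prime_gt0 // p_prime // (leq_trans a_ge1 a_i) (leq_trans _ b_le).
Qed.

Lemma prime_ndvd_prodp j : (j < k)%N -> ~~ (p j.+1 %| prodp p 1 j)%N.
Proof.
move=> j_lt; rewrite /prodp Euclid_dvd_prod ?p_prime // big_has_cond; apply/hasPn => i.
rewrite mem_index_iota ltnS => /andP [i_ge1 i_le] /=.
rewrite dvdn_prime2 ?p_prime ?i_ge1 ?(leq_trans i_le (ltnW j_lt)) //.
apply/eqP => /p_inj; rewrite j_lt i_ge1 (leq_trans i_le (ltnW j_lt)) => /(_ isT isT).
by move=> eq_ji; move: i_le; rewrite -eq_ji ltnn.
Qed.

Lemma Cyclotomic_prodp_comp j b : (j < k)%N ->
  'Phi_(prodp p 1 j) \Po 'X^(p j.+1 * b) =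
  ('Phi_(prodp p 1 j.+1) \Po 'X^b) * ('Phi_(prodp p 1 j) \Po 'X^b).
Proof.
move=> j_lt; rewrite mulnC -comp_polyXn_Xn comp_polyA.
rewrite (@Cyclotomic_comp_Xprime (prodp p 1 j) (p j.+1)) ?p_prime ?prodp_gt0 ?prime_ndvd_prodp //.
  by rewrite comp_polyM prodp_recr.
exact: ltnW.
Qed.

Definition Phi_cofactor j : {poly int} :=
  'Phi_(prodp p 1 j) \Po 'X^(prodp p j.+1 k).

Definition Phi_cofactor_succ j : {poly int} :=
  'Phi_(prodp p 1 j) \Po 'X^(prodp p j.+2 k).

Definition Phi_cofactor_div j : {poly int} :=
  \prod_(j.+1 <= i < k.+1) ('Phi_(prodp p 1 j) \Po 'X^(prodp p j.+1 k %/ p i)).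

Lemma Phi_cofactorS j : (j < k)%N ->
  Phi_cofactor j = Phi_cofactor j.+1 * Phi_cofactor_succ j.
Proof. by move=> j_lt; rewrite /Phi_cofactor prodp_recl // Cyclotomic_prodp_comp. Qed.

Lemma Phi_cofactor_divS j : (j < k)%N ->
  Phi_cofactor_div j =
  Phi_cofactor_div j.+1 * (Phi_cofactor_succ j * P_cyc p k j).
Proof.
move=> j_lt; rewrite /Phi_cofactor_div big_ltn // prodp_recl //.
rewrite mulKn ?prime_gt0 ?p_prime // mulrCA; congr (_ * _).
rewrite /P_cyc -big_split /= !big_nat; apply: eq_bigr => i /andP [j_i i_le].
by rewrite -muln_divA ?dvdn_prodp ?j_i // Cyclotomic_prodp_comp.
Qed.

Lemma Cyclotomic_prodp_mul_prod :
  'Phi_(prodp p 1 k) * \prod_(1 <= i < k.+1) ('X^(prodp p 1 k %/ p i) - 1) =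
  ('X^(prodp p 1 k) - 1) * \prod_(0 <= j < k) P_cyc p k j.
Proof.
have Phi_n0 : 'Phi_(prodp p 1 0) = 'X - 1 by rewrite prodp_nil // Cyclotomic1.
have cofactor0 : Phi_cofactor 0 = 'X^(prodp p 1 k) - 1.
  by rewrite /Phi_cofactor Phi_n0 comp_polyB comp_polyX comp_polyC.
have cofactor_k : Phi_cofactor k = 'Phi_(prodp p 1 k).
  by rewrite /Phi_cofactor prodp_nil // expr1 comp_polyXr.
have cofactor_div0 : Phi_cofactor_div 0 =
    \prod_(1 <= i < k.+1) ('X^(prodp p 1 k %/ p i) - 1).
  rewrite /Phi_cofactor_div Phi_n0; apply: eq_bigr => i _.
  by rewrite comp_polyB comp_polyX comp_polyC.
have cofactor_div_k : Phi_cofactor_div k = 1 by rewrite /Phi_cofactor_div big_geq.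
have := prod_telescope Phi_cofactorS; rewrite cofactor0 cofactor_k => ->.
have := prod_telescope Phi_cofactor_divS.
by rewrite cofactor_div0 cofactor_div_k mul1r big_split /= => ->; rewrite mulrA.
Qed.

Lemma Cyclotomic_prodp_mul_den : (2 <= k)%N ->
  'Phi_(prodp p 1 k) * \prod_(1 <= i < k.+1) (1 - 'X^(prodp p 1 k %/ p i)) =
  ((1 - 'X^(prodp p 1 k)) * \prod_(2 <= i < k.+1) (1 - 'X^(prodp p 2 k %/ p i)))
  * \prod_(1 <= j < k.-1) P_cyc p k j.
Proof.
move=> k_ge2; have [m k_eq] : exists m, k = m.+2.
  by exists (k - 2)%N; rewrite -addn2 subnK.
have P_first : P_cyc p k 0 = \prod_(2 <= i < k.+1) ('X^(prodp p 2 k %/ p i) - 1).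
  rewrite /P_cyc (@prodp_nil p 1 0) // Cyclotomic1; apply: eq_bigr => i _.
  by rewrite comp_polyB comp_polyX comp_polyC.
have P_split : \prod_(0 <= j < k) P_cyc p k j =
    P_cyc p k 0 * \prod_(1 <= j < k.-1) P_cyc p k j.
  have P_last : P_cyc p m.+2 m.+1 = 1 by rewrite /P_cyc big_geq.
  by rewrite k_eq big_ltn // big_nat_recr //= P_last mulr1.
rewrite !prod_one_sub mulrCA Cyclotomic_prodp_mul_prod P_split -P_first.
rewrite k_eq !subSS subn0 exprS; ring.
Qed.

End CyclotomicSquarefree.

Theorem lemma1 (k : nat) (p : nat -> nat)
  (hk : (2 <= k)%N)
  (hprime : forall i, (1 <= i <= k)%N -> prime (p i))
  (hdist : forall i j, (1 <= i <= k)%N -> (1 <= j <= k)%N -> p i = p j -> i = j) :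
  ('Phi_(prodp p 1 k))%:F =
    f_cyc p k * \prod_(1 <= j < k.-1) (P_cyc p k j)%:F.
Proof.
have n_gt0 : (0 < prodp p 1 k)%N by exact: prodp_gt0 hprime _ _ _ _.
set den := \prod_(1 <= i < k.+1) (1 - 'X^(prodp p 1 k %/ p i)) : {poly int}.
have den_neq0 : den%:F != 0.
  rewrite tofrac_eq0 /den prod_one_sub mulf_eq0 signr_eq0 /= prodf_seq_neq0.
  apply/allP => i; rewrite mem_index_iota ltnS => i_range; apply/implyP => _.
  rewrite -size_poly_eq0 -polyC1 size_XnsubC // divn_gt0 ?prime_gt0 ?hprime //.
  exact/(dvdn_leq n_gt0)/dvdn_prodp.
rewrite /f_cyc -rmorph_prod -/den -[LHS](mulfK den_neq0) -rmorphM.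
by rewrite Cyclotomic_prodp_mul_den // rmorphM mulrAC.
Qed.
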